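(* Let $\mathcal{H}$ be a finite class of classifiers $h:\mathcal{X}\times\{-1,1\}\to\{0,1\}$ containing the two classifiers $\mathbf{1}[a=1]$ and $\mathbf{1}[a=-1]$. Let $(\hat\pi,\hat\lambda)$ be a $\nu$-approximate saddle point of the Lagrangian $\mathcal{L}$ over $\Delta(\mathcal{H})\times\Lambda$. Then $$err(\hat\pi,\mathcal{P})\le\mathrm{OPT}+2\nu\quad\text{and}\quad\forall j\in\{\pm1\}:\ \mathrm{FPR}_j(\hat\pi)-\mathrm{FPR}_{-j}(\hat\pi)\le\gamma+2\nu.$$
   Context: Given points $X_1,\dots,X_n$ (each $X_j=(\hat x_j,a_j)$), labels $Y_j\in\{0,1\}$ and nonnegative weights $w_j$ with $\sum_j w_j=1$, let $err(h,\mathcal{P})=\sum_{j=1}^n w_j\mathbf{1}\{h(X_j)\neq Y_j\}$ and $err(\pi,\mathcal{P})=\mathbb{E}_{h\sim\pi}[err(h,\mathcal{P})]$ for $\pi\in\Delta(\mathcal{H})$. Let $\mathcal{D}_E$ be a fixed empirical distribution of labeled examples $(\hat x,a,y)$ containing negative examples of both groups, and for $j\in\{\pm1\}$ let $\mathrm{FPR}_j(\pi)=\mathbb{E}_{h\sim\pi}[\Pr_{\mathcal{D}_E}(h(x)=1\mid a=j,y\text{ negative})]$. Fix $\gamma\ge0$. $\mathrm{OPT}=\min\{err(\pi,\mathcal{P}):\pi\in\Delta(\mathcal{H}),\ \mathrm{FPR}_j(\pi)-\mathrm{FPR}_{-j}(\pi)\le\gamma\ \forall j\in\{\pm1\}\}$.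 The Lagrangian is $\mathcal{L}(\pi,\lambda)=err(\pi,\mathcal{P})+\sum_{j\in\{\pm1\}}\lambda_j(\mathrm{FPR}_j(\pi)-\mathrm{FPR}_{-j}(\pi)-\gamma)$ for $\lambda\in\mathbb{R}^2_+$, and $\Lambda=\{\lambda\in\mathbb{R}^2_+:\|\lambda\|_1\le2\}$. $(\hat\pi,\hat\lambda)\in\Delta(\mathcal{H})\times\Lambda$ is a $\nu$-approximate saddle point if $\mathcal{L}(\hat\pi,\hat\lambda)\le\mathcal{L}(g,\hat\lambda)+\nu$ for all $g\in\Delta(\mathcal{H})$ and $\mathcal{L}(\hat\pi,\hat\lambda)\ge\mathcal{L}(\hat\pi,\lambda)-\nu$ for all $\lambda\in\Lambda$. *)

From mathcomp Require Import all_boot all_order all_algebra.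
Set Implicit Arguments. Unset Strict Implicit. Unset Printing Implicit Defensive.
Import Order.TTheory GRing.Theory Num.Theory.
Local Open Scope ring_scope.

(* Conventions:
   - the group attribute a in {-1,1} is encoded by a bool: true <-> a = 1,
     false <-> a = -1; hence "-j" is "~~ j".
   - labels y in {0,1} and classifier outputs in {0,1} are bools (true <-> 1);
     "y negative" means y = 0, i.e. ~~ y.
   - a labeled example (x^, a, y) is a triple ((x^, a), y).
   - the hypothesis class H is given by a finite index type I and a map
     clf : I -> classifier; Delta(H) = probability vectors on I. *)

Section Defs.
Variable R : realFieldType.
Variable X : Type.

Definition classifier := X * bool -> bool.

Definition is_dist (I : finType) (pi : I -> R) : Prop :=
  (forall i, 0 <= pi i) /\ \sum_i pi i = 1.

Definition err_h (n : nat) (Xs : 'I_n -> X * bool) (Ys : 'I_n -> bool)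
  (w : 'I_n -> R) (h : classifier) : R :=
  \sum_(j < n) w j * (h (Xs j) != Ys j)%:R.

Definition err_pi (I : finType) (clf : I -> classifier) (n : nat)
  (Xs : 'I_n -> X * bool) (Ys : 'I_n -> bool) (w : 'I_n -> R) (pi : I -> R) : R :=
  \sum_i pi i * err_h Xs Ys w (clf i).

Definition neg_count (DE : seq (X * bool * bool)) (j : bool) : nat :=
  count (fun e => (e.1.2 == j) && ~~ e.2) DE.

Definition fp_count (DE : seq (X * bool * bool)) (j : bool) (h : classifier) : nat :=
  count (fun e => [&& e.1.2 == j, ~~ e.2 & h e.1]) DE.

Definition fpr_h (DE : seq (X * bool * bool)) (j : bool) (h : classifier) : R :=
  (fp_count DE j h)%:R / (neg_count DE j)%:R.

Definition FPR (I : finType) (clf : I -> classifier) (DE : seq (X * bool * bool))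
  (j : bool) (pi : I -> R) : R :=
  \sum_i pi i * fpr_h DE j (clf i).

Definition Lagr (I : finType) (clf : I -> classifier) (n : nat)
  (Xs : 'I_n -> X * bool) (Ys : 'I_n -> bool) (w : 'I_n -> R)
  (DE : seq (X * bool * bool)) (gamma : R) (pi : I -> R) (lam : bool -> R) : R :=
  err_pi clf Xs Ys w pi
  + \sum_(j : bool) lam j * (FPR clf DE j pi - FPR clf DE (~~ j) pi - gamma).

Definition in_Lambda (lam : bool -> R) : Prop :=
  (forall j, 0 <= lam j) /\ \sum_(j : bool) `|lam j| <= 2.

Definition approx_saddle (I : finType) (clf : I -> classifier) (n : nat)
  (Xs : 'I_n -> X * bool) (Ys : 'I_n -> bool) (w : 'I_n -> R)
  (DE : seq (X * bool * bool)) (gamma nu : R) (pi_hat : I -> R) (lam_hat : bool -> R) : Prop :=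
  [/\ is_dist pi_hat, in_Lambda lam_hat,
      (forall g, is_dist g ->
         Lagr clf Xs Ys w DE gamma pi_hat lam_hat <= Lagr clf Xs Ys w DE gamma g lam_hat + nu)
    & (forall lam, in_Lambda lam ->
         Lagr clf Xs Ys w DE gamma pi_hat lam - nu <= Lagr clf Xs Ys w DE gamma pi_hat lam_hat)].

(* feasibility for the program defining OPT *)
Definition fair_feasible (I : finType) (clf : I -> classifier)
  (DE : seq (X * bool * bool)) (gamma : R) (pi : I -> R) : Prop :=
  is_dist pi /\ forall j : bool, FPR clf DE j pi - FPR clf DE (~~ j) pi <= gamma.

End Defs.

(* Write the Lagrangian with respect to the pair of opposite constraints as
   L(pi, lam) = err pi + (lam_j - lam_-j) gap_j pi - gamma (lam_j + lam_-j),
   where gap_j = FPR_j - FPR_-j.  The error bound is the usual one: test the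
   lam-player against lam = 0 and the pi-player against a feasible pi, on which
   L(pi, lam_hat) <= err pi.  For the fairness bound let x = gap_j pi_hat - gamma
   and d = lam_hat_j - lam_hat_-j.  Testing the lam-player against lam = 2 e_j
   gives 2x - nu <= d x, and testing the pi-player against the pure classifier
   1[a = -j], whose gap_j is -1 and error at most 1, gives d (1 + x + gamma) <= 1 + nu.
   If x > nu, the second inequality forces d < 1 and then the first one fails;
   hence x <= nu, which is even stronger than the claimed bound. *)

From mathcomp Require Import all_boot all_order all_algebra.
From mathcomp Require Import ring lra.
Set Implicit Arguments. Unset Strict Implicit. Unset Printing Implicit Defensive.
Import Order.TTheory GRing.Theory Num.Theory.
Local Open Scope ring_scope.

Lemma slack_le_nu (R : realFieldType) (d x gamma nu : R) :
  0 <= gamma -> 0 <= nu ->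
  d * (1 + x + gamma) <= 1 + nu -> 2 * x - nu <= d * x -> x <= nu.
Proof.
move=> gamma0 nu0 dxg_le dx_ge; rewrite leNgt; apply/negP => nu_lt_x.
have d_lt1 : d < 1.
  rewrite -(ltr_pM2r (_ : 0 < 1 + x + gamma)); last by lra.
  by rewrite mul1r; apply: (le_lt_trans dxg_le); lra.
have : d * x < x by rewrite -[ltRHS]mul1r ltr_pM2r //; lra.
lra.
Qed.

Section PointMass.
Variables (R : realFieldType) (I : finType).

Definition dirac_dist (i0 : I) : I -> R := fun i => (i == i0)%:R.

Lemma sum_dirac_dist (i0 : I) (f : I -> R) : \sum_i dirac_dist i0 i * f i = f i0.
Proof.
rewrite (bigD1 i0) //= /dirac_dist eqxx mul1r big1 ?addr0 // => i /negbTE ->.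
by rewrite mul0r.
Qed.

Lemma is_dist_dirac (i0 : I) : is_dist (dirac_dist i0).
Proof.
split=> [i|]; first exact: ler0n.
by rewrite -[RHS](sum_dirac_dist i0 (fun=> 1)); apply: eq_bigr => i _; rewrite mulr1.
Qed.

End PointMass.

Section Lambda.
Variable R : realFieldType.

Definition Lambda_vertex (j : bool) : bool -> R := fun k => if k == j then 2 else 0.

Lemma in_Lambda0 : in_Lambda (fun=> 0 : R).
Proof. by split=> // ; rewrite big_bool /= normr0 addr0. Qed.

Lemma in_Lambda_vertex j : in_Lambda (Lambda_vertex j).
Proof.
split=> [k|]; first by rewrite /Lambda_vertex; case: (k == j); lra.
by rewrite big_bool /Lambda_vertex; case: j => /=; rewrite normr0 ger0_norm //; lra.
Qed.

End Lambda.

Lemma fp_count_group_indicator (X : Type) (DE : seq (X * bool * bool)) (j k : bool)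
    (h : classifier X) :
  (forall xa, h xa = (xa.2 == k)) ->
  fp_count DE j h = if j == k then neg_count DE j else 0%N.
Proof.
rewrite /fp_count /neg_count; case: (eqVneq j k) => [<-|njk] hE.
  by apply: eq_count => e; rewrite hE; case: (_ == j); rewrite ?andbT.
rewrite -(count_pred0 DE); apply: eq_count => e /=; rewrite hE.
by case: eqP => // ->; rewrite (negbTE njk) andbF.
Qed.

Lemma fpr_group_indicator (R : realFieldType) (X : Type) (DE : seq (X * bool * bool))
    (j k : bool) (h : classifier X) :
  (0 < neg_count DE j)%N -> (forall xa, h xa = (xa.2 == k)) ->
  fpr_h R DE j h = (j == k)%:R.
Proof.
move=> negj hE; rewrite /fpr_h (fp_count_group_indicator _ _ hE).
by case: eqP => _; rewrite ?mul0r // divff // pnatr_eq0 -lt0n.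
Qed.

Section Lagrangian.
Variables (R : realFieldType) (X : Type) (I : finType) (clf : I -> classifier X).
Variables (n : nat) (Xs : 'I_n -> X * bool) (Ys : 'I_n -> bool) (w : 'I_n -> R).
Variables (DE : seq (X * bool * bool)) (gamma : R).

Local Notation err := (err_pi clf Xs Ys w).
Local Notation L := (Lagr clf Xs Ys w DE gamma).

Definition fpr_gap (j : bool) (pi : I -> R) : R := FPR clf DE j pi - FPR clf DE (~~ j) pi.

Lemma fpr_gapN j pi : fpr_gap (~~ j) pi = - fpr_gap j pi.
Proof. by rewrite /fpr_gap negbK opprB. Qed.

Lemma LagrE j pi lam :
  L pi lam = err pi + (lam j - lam (~~ j)) * fpr_gap j pi - gamma * (lam j + lam (~~ j)).
Proof.
have Lagr_pair : L pi lam = err pi + lam j * (fpr_gap j pi - gamma)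
                         + lam (~~ j) * (fpr_gap (~~ j) pi - gamma).
  by rewrite /Lagr big_bool; case: j; rewrite /= ?addrA // addrAC.
by rewrite Lagr_pair fpr_gapN; ring.
Qed.

Lemma Lagr0 pi : L pi (fun=> 0) = err pi.
Proof. by rewrite (LagrE true); ring. Qed.

Lemma Lagr_vertex j pi : L pi (Lambda_vertex R j) = err pi + 2 * (fpr_gap j pi - gamma).
Proof. by rewrite (LagrE j) /Lambda_vertex eqxx; case: j => /=; ring. Qed.

Lemma Lagr_feasible_le pi lam :
  fair_feasible clf DE gamma pi -> (forall j, 0 <= lam j) -> L pi lam <= err pi.
Proof.
move=> [_ feas] lam0; rewrite /Lagr gerDl; apply: sumr_le0 => j _.
by apply: mulr_ge0_le0 => //; rewrite subr_le0 feas.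
Qed.

Hypothesis w_ge0 : forall j, 0 <= w j.

Lemma err_pi_ge0 pi : is_dist pi -> 0 <= err pi.
Proof.
move=> [pi0 _]; apply: sumr_ge0 => i _; apply/mulr_ge0/sumr_ge0 => // j _.
exact/mulr_ge0/ler0n.
Qed.

Lemma err_dirac_le1 i0 : \sum_j w j = 1 -> err (dirac_dist R i0) <= 1.
Proof.
move=> w1; rewrite /err_pi sum_dirac_dist /err_h -[leRHS]w1.
by apply: ler_sum => j _; case: (_ != _); rewrite ?mulr1 ?mulr0.
Qed.

Lemma fpr_gap_dirac_indicator j i0 :
  (forall k, (0 < neg_count DE k)%N) -> (forall xa, clf i0 xa = (xa.2 == ~~ j)) ->
  fpr_gap j (dirac_dist R i0) = -1.
Proof.
move=> negc clfE; rewrite /fpr_gap /FPR !sum_dirac_dist.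
by rewrite !(fpr_group_indicator _ (negc _) clfE) eqxx; case: j {clfE}; rewrite /= sub0r.
Qed.

Variables (nu : R) (pi_hat : I -> R) (lam_hat : bool -> R).
Hypothesis saddle : approx_saddle clf Xs Ys w DE gamma nu pi_hat lam_hat.

Lemma approx_saddle_nu_ge0 : 0 <= nu.
Proof. by case: saddle => dpi _ best_pi _; have := best_pi _ dpi; rewrite lerDl. Qed.

Lemma approx_saddle_err_le pi :
  fair_feasible clf DE gamma pi -> err pi_hat <= err pi + 2 * nu.
Proof.
case: saddle => _ [lam0 _] best_pi best_lam feas; have := best_lam _ (in_Lambda0 R).
have := best_pi _ (proj1 feas); have := Lagr_feasible_le feas lam0.
rewrite Lagr0; lra.
Qed.

Lemma approx_saddle_gap_le j i0 :
  \sum_j w j = 1 -> (forall k, (0 < neg_count DE k)%N) -> 0 <= gamma ->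
  (forall xa, clf i0 xa = (xa.2 == ~~ j)) ->
  fpr_gap j pi_hat <= gamma + nu.
Proof.
move=> w1 negc gamma0 clfE; case: saddle => dpi [lam0 _] best_pi best_lam.
have vertex_test := best_lam _ (in_Lambda_vertex R j).
have dirac_test := best_pi _ (is_dist_dirac R i0).
rewrite Lagr_vertex !(LagrE j) (fpr_gap_dirac_indicator negc clfE) in vertex_test dirac_test.
have err0 := err_pi_ge0 dpi; have err_dirac1 := err_dirac_le1 i0 w1.
have gamma_lamN0 : 0 <= gamma * lam_hat (~~ j) by rewrite mulr_ge0.
rewrite -lerBlDl.
by apply: (slack_le_nu (d := lam_hat j - lam_hat (~~ j)) gamma0 approx_saddle_nu_ge0); lra.
Qed.

End Lagrangian.

Theorem lemma10 (R : realFieldType) (X : Type) (I : finType)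
  (clf : I -> classifier X)
  (n : nat) (Xs : 'I_n -> X * bool) (Ys : 'I_n -> bool) (w : 'I_n -> R)
  (DE : seq (X * bool * bool)) (gamma nu : R)
  (pi_hat : I -> R) (lam_hat : bool -> R) :
  (forall j, 0 <= w j) -> \sum_j w j = 1 ->
  (forall j : bool, (0 < neg_count DE j)%N) ->
  0 <= gamma ->
  (exists i, clf i = (fun xa : X * bool => xa.2)) ->
  (exists i, clf i = (fun xa : X * bool => ~~ xa.2)) ->
  approx_saddle clf Xs Ys w DE gamma nu pi_hat lam_hat ->
  (forall pi, fair_feasible clf DE gamma pi ->
     err_pi clf Xs Ys w pi_hat <= err_pi clf Xs Ys w pi + 2 * nu) /\
  (forall j : bool,
     FPR clf DE j pi_hat - FPR clf DE (~~ j) pi_hat <= gamma + 2 * nu).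
Proof.
move=> w0 w1 negc gamma0 [ipos clf_pos] [ineg clf_neg] saddle.
split=> [pi|j]; first exact: (approx_saddle_err_le saddle).
have [i0 clfE] : exists i0, forall xa, clf i0 xa = (xa.2 == ~~ j).
  by case: j; [exists ineg | exists ipos] => -[x []]; rewrite ?clf_pos ?clf_neg.
have := approx_saddle_gap_le w0 saddle w1 negc gamma0 clfE.
have := approx_saddle_nu_ge0 saddle; rewrite /fpr_gap; lra.
Qed.
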